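(* Let $(G,+)$ be an abelian group with identity $0$. (1) Let $M$ be a (loopless) matroid over $G$. If $M$ is matched to itself, then $0\notin E(M)$. (2) If $G$ satisfies the matroid matching property, then $G$ is either torsion-free or cyclic of prime order.
   Context: A matroid over $G$ is a matroid $M$ whose finite ground set $E(M)$ is a subset of $G$; all matroids are assumed loopless, i.e. every element lies in some independent set. $r(M)$ denotes the rank of $M$. For matroids $M,N$ over $G$ with $r(M)=r(N)=n>0$ and bases $\mathcal{M}=\{a_1,\dots,a_n\}$ of $M$ and $\mathcal{N}=\{b_1,\dots,b_n\}$ of $N$, we say $\mathcal{M}$ is matched to $\mathcal{N}$ if there is a permutation $\pi\in S_n$ with $a_i+b_{\pi(i)}\notin E(M)$ for all $1\le i\le n$. $M$ is matched to $N$ if for every basis $\mathcal{M}$ of $M$ there exists a basis $\mathcal{N}$ of $N$ such that $\mathcal{M}$ is matched to $\mathcal{N}$. The group $G$ has the matroid matching property if for every two matroids $M,N$ over $G$ with $r(M)=r(N)=n>0$, $|E(M)|\le |E(N)|$ and $0\notin E(N)$, $M$ is matched to $N$. *)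

From HB Require Import structures.
From mathcomp Require Import all_boot all_order all_algebra.
From mathcomp Require Import finmap.
Set Implicit Arguments. Unset Strict Implicit. Unset Printing Implicit Defensive.
Import GRing.Theory.
Local Open Scope fset_scope.
Local Open Scope ring_scope.

Record matroid (G : zmodType) := Matroid {
  ground : {fset G};
  indep : {fset G} -> Prop;
  indep0 : indep fset0;
  indep_sub : forall A, indep A -> A `<=` ground;
  indep_hered : forall A B, B `<=` A -> indep A -> indep B;
  indep_exch : forall A B, indep A -> indep B -> (#|` A| < #|` B|)%N ->
     exists2 x, x \in B `\` A & indep (x |` A);
  loopless : forall x, x \in ground -> exists2 A, indep A & x \in A
}.

Definition basis (G : zmodType) (M : matroid G) (B : {fset G}) : Prop :=
  indep M B /\ (forall A, indep M A -> B `<=` A -> A = B).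

Definition has_rank (G : zmodType) (M : matroid G) (n : nat) : Prop :=
  exists2 B, basis M B & #|` B| = n.

(* basis A = {a_1..a_n} of M matched to basis B = {b_1..b_n}: there is a
   reordering t = (b_pi(1),...,b_pi(n)) of B with a_i + b_pi(i) \notin E(M). *)
Definition bases_matched (G : zmodType) (M : matroid G) (A B : {fset G}) : Prop :=
  exists t : seq G, perm_eq t (B : seq G) /\
    all2 (fun a b => a + b \notin ground M) (A : seq G) t.

Definition matched_to (G : zmodType) (M N : matroid G) : Prop :=
  forall A, basis M A -> exists2 B, basis N B & bases_matched M A B.

Definition matroid_matching_property (G : zmodType) : Prop :=
  forall (M N : matroid G) (n : nat),
    has_rank M n -> has_rank N n -> (0 < n)%N ->
    (#|` ground M| <= #|` ground N|)%N -> 0 \notin ground N ->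
    matched_to M N.

Definition torsion_free (G : zmodType) : Prop :=
  forall (x : G) (n : nat), (0 < n)%N -> x *+ n = 0 -> x = 0.

Definition cyclic_prime_order (G : zmodType) : Prop :=
  (exists g : G, forall x : G, exists k : int, x = g *~ k) /\
  (exists s : seq G, [/\ uniq s, (forall x : G, x \in s) & prime (size s)]).

(* If 0 lies in E(M), extend {0} to a basis B of M: in a matching of B with a
   basis C of M, 0 is paired with some b in C, and 0 + b = b lies in E(M).
   If G is not torsion-free it has an element y of prime order p; let
   H = {0, y, ..., (p-1)y}. If some g were outside H, the free matroids on H
   and on (H \ {0}) u {g} would have the same size and rank, yet the basis H
   could not be matched: its element z paired with y would satisfy z + y
   outside H, although H is closed under adding y. Hence G = H. *)

From mathcomp Require Import all_boot all_order all_algebra.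
From mathcomp Require Import finmap.
From mathcomp Require Import zify.
From Stdlib Require Import Classical.
Local Open Scope fset_scope.
Local Open Scope ring_scope.
Import GRing.Theory.

Set Implicit Arguments.
Unset Strict Implicit.
Unset Printing Implicit Defensive.

Lemma all2_flip (T U : Type) (r : T -> U -> bool) s t :
  all2 r s t = all2 (fun y x => r x y) t s.
Proof. by elim: s t => [|x s IHs] [|y t] //=; rewrite IHs. Qed.

Lemma all2_meml (T U : eqType) (r : T -> U -> bool) s t x :
  all2 r s t -> x \in s -> exists2 y, y \in t & r x y.
Proof.
elim: s t => [|x' s IHs] [|y t] //= /andP[rxy rst].
rewrite in_cons => /predU1P[->|xs]; first by exists y; rewrite ?mem_head.
by have [y' y't rxy'] := IHs t rst xs; exists y'; rewrite // in_cons y't orbT.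
Qed.

Lemma all2_memr (T U : eqType) (r : T -> U -> bool) s t y :
  all2 r s t -> y \in t -> exists2 x, x \in s & r x y.
Proof. by rewrite all2_flip; apply: all2_meml. Qed.

Section Matroid.
Variable G : zmodType.
Implicit Types (M : matroid G) (A B E : {fset G}).

Lemma indep_basis_ext M A : indep M A -> exists2 B, basis M B & A `<=` B.
Proof.
have [k] := ubnP (#|`ground M| - #|`A|); elim: k A => // k IHk A ltAk iA.
have [bA|nbA] := classic (basis M A); first by exists A.
have [A' iA' [sAA' nA'A]] : exists2 A', indep M A' & A `<=` A' /\ A' <> A.
  apply: NNPP => noA'; apply: nbA; split=> // A' iA' sAA'.
  by apply: NNPP => nA'A; apply: noA'; exists A'.
have ltAA' : (#|`A| < #|`A'|)%N.
  by apply: fproper_ltn_card; rewrite fproperEneq sAA' andbT eq_sym; apply/eqP.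
have leA'E : (#|`A'| <= #|`ground M|)%N by apply/fsubset_leq_card/indep_sub.
have [B bB sA'B] := IHk A' ltac:(lia) iA'.
by exists B; last exact: fsubset_trans sA'B.
Qed.

Lemma basis_sub_ground M B : basis M B -> B `<=` ground M.
Proof. by case=> /indep_sub. Qed.

Lemma self_matched_0_notin_ground M : matched_to M M -> 0 \notin ground M.
Proof.
move=> matchedMM; apply/negP => E0.
have [A iA A0] := loopless E0.
have [B bB sAB] := indep_basis_ext iA.
have [C bC [t [perm_tC matched]]] := matchedMM B bB.
have [c ct] := all2_meml matched (fsubsetP sAB 0 A0).
by rewrite add0r (fsubsetP (basis_sub_ground bC)) // -(perm_mem perm_tC).
Qed.

Lemma fsubset_exchange E A B : A `<=` E -> B `<=` E ->
  (#|`A| < #|`B|)%N -> exists2 x, x \in B `\` A & x |` A `<=` E.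
Proof.
move=> sAE sBE ltAB; have /fset0Pn[x xBA] : B `\` A != fset0.
  by rewrite fsetD_eq0; apply: contraTN ltAB => /fsubset_leq_card; rewrite leqNgt.
exists x; rewrite // fsubUset fsub1set sAE andbT.
by move: xBA; rewrite in_fsetD => /andP[_ /(fsubsetP sBE)].
Qed.

Lemma free_matroid_loopless E x : x \in E -> exists2 A, A `<=` E & x \in A.
Proof. by move=> xE; exists [fset x]; rewrite ?fsub1set ?fset11. Qed.

Definition free_matroid E : matroid G :=
  @Matroid G E (fun A => A `<=` E) (fsub0set E) (fun _ sAE => sAE)
    (fun _ _ sBA sAE => fsubset_trans sBA sAE) (@fsubset_exchange E)
    (@free_matroid_loopless E).

Lemma free_matroid_basisE E B : basis (free_matroid E) B <-> B = E.
Proof.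
split=> [[/= sBE maxB]|->]; first exact/esym/maxB.
by split=> //= A sAE sEA; apply/eqP; rewrite eqEfsubset sAE.
Qed.

Lemma free_matroid_rank E : has_rank (free_matroid E) #|`E|.
Proof. by exists E => //; apply/free_matroid_basisE. Qed.

Lemma matching_property_translate_closed_full (H : {fset G}) (y : G) :
  matroid_matching_property G -> 0 \in H -> y \in H -> y != 0 ->
  (forall z, z \in H -> z + y \in H) -> forall g, g \in H.
Proof.
move=> mmp H0 Hy y_neq0 Hclosed g; apply/negPn/negP => gNH.
pose E := g |` (H `\ 0).
have cardE : #|`E| = #|`H|.
  by rewrite cardfsU1 in_fsetD1 (negbTE gNH) andbF (cardfsD1 0 H) H0.
have E0 : 0 \notin E.
  by rewrite in_fset1U in_fsetD1 eqxx orbF eq_sym; apply: contraNneq gNH => ->.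
have H_gt0 : (0 < #|`H|)%N by rewrite cardfs_gt0; apply/fset0Pn; exists 0.
have rankE := free_matroid_rank E; rewrite cardE in rankE.
have [B /free_matroid_basisE -> [t [perm_tE matched]]] :=
  mmp _ _ _ (free_matroid_rank H) rankE H_gt0 (eq_leq (esym cardE)) E0 H
    (proj2 (free_matroid_basisE _ _) erefl).
have yt : y \in t.
  by rewrite (perm_mem perm_tE) in_fset1U in_fsetD1 y_neq0 Hy orbT.
by have [z zH] := all2_memr matched yt; rewrite /= Hclosed.
Qed.

End Matroid.

Section ElementOrder.
Variable G : zmodType.

Lemma torsion_has_order (x : G) n : (0 < n)%N -> x *+ n = 0 ->
  exists2 m, (0 < m)%N & forall k, (x *+ k == 0) = (m %| k)%N.
Proof.
move=> n_gt0 xn0.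
have ex_m : exists m, (0 < m)%N && (x *+ m == 0) by exists n; rewrite n_gt0 xn0 eqxx.
case: (ex_minnP ex_m) => m /andP[m_gt0 /eqP xm0] min_m; exists m => // k.
have xk_mod : x *+ k = x *+ (k %% m).
  by rewrite {1}(divn_eq k m) mulrnDr mulnC mulrnA xm0 mul0rn add0r.
apply/idP/idP => [|/dvdnP[q ->]]; last by rewrite mulnC mulrnA xm0 mul0rn.
rewrite xk_mod /dvdn => xkm0; apply: contraT; rewrite -lt0n => km_gt0.
by have := min_m _ (introT andP (conj km_gt0 xkm0)); rewrite leqNgt ltn_pmod.
Qed.

Lemma prime_order_multiple (x : G) m : (1 < m)%N ->
  (forall k, (x *+ k == 0) = (m %| k)%N) ->
  exists2 p, prime p & forall k, (x *+ (m %/ p) *+ k == 0) = (p %| k)%N.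
Proof.
move=> m_gt1 xP; have p_gt0 := prime_gt0 (pdiv_prime m_gt1).
exists (pdiv m) => [|k]; first exact: pdiv_prime.
rewrite -mulrnA xP -{1}(divnK (pdiv_dvd m)) dvdn_pmul2l //.
by rewrite divn_gt0 // dvdn_leq ?pdiv_dvd // ltnW.
Qed.

Lemma not_torsion_free_prime_order : ~ torsion_free G ->
  exists (y : G) (p : nat), prime p /\ forall k, (y *+ k == 0) = (p %| k)%N.
Proof.
move=> not_tf; have [x [n [n_gt0 [xn0 x_neq0]]]] :
    exists (x : G) n, [/\ (0 < n)%N, x *+ n = 0 & x <> 0].
  apply: NNPP => none; apply: not_tf => x n n_gt0 xn0.
  by apply: NNPP => x_neq0; apply: none; exists x, n.
have [m m_gt0 xP] := torsion_has_order n_gt0 xn0.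
have m_gt1 : (1 < m)%N.
  rewrite ltn_neqAle m_gt0 andbT eq_sym; apply/eqP => m1; apply: x_neq0.
  by apply/eqP; rewrite -[x]mulr1n xP m1.
by have [p p_prime yP] := prime_order_multiple m_gt1 xP; exists (x *+ (m %/ p)), p.
Qed.

End ElementOrder.

Section PrimeCycle.
Variables (G : zmodType) (y : G) (p : nat).
Hypotheses (p_prime : prime p) (yP : forall k, (y *+ k == 0) = (p %| k)%N).

Definition cycle_seq := mkseq (fun i => y *+ i) p.

Lemma eq_mulrn_order i j : (y *+ i == y *+ j) = (i == j %[mod p])%N.
Proof.
wlog le_ji : i j / (j <= i)%N.
  move=> wlog_ij; case: (leqP j i) => [/wlog_ij //|/ltnW/wlog_ij].
  by rewrite eq_sym => ->; apply: eq_sym.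
by rewrite eqn_mod_dvd // -yP mulrnBr // subr_eq0.
Qed.

Lemma cycle_seq_uniq : uniq cycle_seq.
Proof.
rewrite map_inj_in_uniq ?iota_uniq // => i j.
rewrite !mem_iota !add0n => /andP[_ ltip] /andP[_ ltjp] /eqP.
by rewrite eq_mulrn_order !modn_small // => /eqP.
Qed.

Lemma cycle_seqP z : reflect (exists k, z = y *+ k) (z \in cycle_seq).
Proof.
apply: (iffP mapP) => [[i _ ->]|[k ->]]; first by exists i.
exists (k %% p)%N; first by rewrite mem_iota add0n ltn_pmod ?prime_gt0.
by apply/eqP; rewrite eq_mulrn_order modn_mod.
Qed.

Lemma matching_property_cyclic_prime_order :
  matroid_matching_property G -> cyclic_prime_order G.
Proof.
move=> mmp; pose H := [fset z in cycle_seq].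
have inH z : (z \in H) = (z \in cycle_seq) by rewrite inE.
have y_neq0 : y != 0.
  by rewrite -[y]mulr1n yP dvdn1; apply: contraTneq p_prime => ->.
have H_closed z : z \in H -> z + y \in H.
  by rewrite !inH => /cycle_seqP[k ->]; apply/cycle_seqP; exists k.+1; rewrite mulrSr.
have H0 : 0 \in H by rewrite inH; apply/cycle_seqP; exists 0%N.
have Hy : y \in H by rewrite inH; apply/cycle_seqP; exists 1%N; rewrite mulr1n.
have covers z : z \in cycle_seq.
  by rewrite -inH; apply: matching_property_translate_closed_full H_closed z.
split; first by exists y => z; have /cycle_seqP[k ->] := covers z; exists k.
by exists cycle_seq; rewrite cycle_seq_uniq size_mkseq.
Qed.

End PrimeCycle.

Theorem proposition1p8 (G : zmodType) :
  (forall M : matroid G, matched_to M M -> 0 \notin ground M) /\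
  (matroid_matching_property G -> torsion_free G \/ cyclic_prime_order G).
Proof.
split=> [M|mmp]; first exact: self_matched_0_notin_ground.
have [|/not_torsion_free_prime_order [y [p [p_prime yP]]]] :=
  classic (torsion_free G); first by left.
by right; apply: (matching_property_cyclic_prime_order p_prime yP).
Qed.
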